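(* $$\sum_{n=1}^\infty \frac{3^n H_n \binom{2n}{n}}{n\, 2^{4n}} = 2\,\mathrm{Li}_2\!\left(\tfrac{1}{3}\right).$$
   Context: $H_n=\sum_{k=1}^n \frac{1}{k}$ denotes the $n$-th harmonic number and $\binom{2n}{n}$ the central binomial coefficient; $\mathrm{Li}_2(x)=\sum_{m=1}^\infty \frac{x^m}{m^2}$ for $|x|\le 1$ is the dilogarithm. *)

From Stdlib Require Import Reals.
From Coquelicot Require Import Coquelicot.
Open Scope R_scope.

Fixpoint harmonic (n : nat) : R :=
  match n with
  | O => 0
  | S m => harmonic m + / INR (S m)
  end.

Definition central_binom (n : nat) : R := Binomial.C (2 * n) n.

Definition Li2 (x : R) : R :=
  Series (fun m : nat => match m with O => 0 | S _ => x ^ m / (INR m ^ 2) end).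

Definition mainTerm (n : nat) : R :=
  match n with
  | O => 0
  | S _ => 3 ^ n * harmonic n * central_binom n / (INR n * 2 ^ (4 * n))
  end.

From Stdlib Require Import Reals Lra Lia Factorial.
From Coquelicot Require Import Coquelicot.
Open Scope R_scope.

(* With c_n = C(2n,n), the recurrence (n+1) c_(n+1) = (4n+2) c_n gives the linear ODE
   (1 - 4x) B' = 2B for B(x) = sum c_n x^n, and n q_n = (4n-2) q_(n-1) + c_n gives an
   inhomogeneous one for Q(x) = sum H_n c_n x^n.  The substitution x = y/(1+y)^2 makes
   sqrt(1 - 4x) = (1-y)/(1+y) rational, and the ODEs become the statements that both
   sides of B(x) sqrt(1-4x) = 1, of Q(x) sqrt(1-4x) = 2 sum y^n/n and of
   sum H_n c_n x^n / n = 2 Li_2(y) have the same derivative in y; they agree at y = 0.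
   At y = 1/3 we get x = 3/16. *)

Lemma central_binom_fact n :
  central_binom n = INR (fact (2 * n)) / (INR (fact n) * INR (fact n)).
Proof.
  unfold central_binom, Binomial.C.
  replace (2 * n - n)%nat with n by lia. reflexivity.
Qed.

Lemma central_binom_0 : central_binom 0 = 1.
Proof. rewrite central_binom_fact. simpl. field. Qed.

Lemma central_binom_succ n :
  INR (S n) * central_binom (S n) = (4 * INR n + 2) * central_binom n.
Proof.
  rewrite !central_binom_fact.
  replace (2 * S n)%nat with (S (S (2 * n))) by lia.
  rewrite !fact_simpl, !mult_INR, !S_INR, mult_INR. simpl (INR 2).
  assert (Hfact := INR_fact_neq_0 n). assert (Hn := pos_INR n).
  field. split; [exact Hfact | lra].
Qed.

Lemma central_binom_pos n : 0 < central_binom n.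
Proof.
  rewrite central_binom_fact.
  apply Rdiv_lt_0_compat; [|apply Rmult_lt_0_compat]; apply INR_fact_lt_0.
Qed.

Lemma central_binom_le_pow4 n : central_binom n <= 4 ^ n.
Proof.
  induction n as [|n IH]; [rewrite central_binom_0; simpl; lra|].
  assert (Hrec := central_binom_succ n). rewrite S_INR in Hrec.
  assert (Hn := pos_INR n). assert (Hc := central_binom_pos n).
  simpl. nra.
Qed.

Lemma harmonic_nonneg n : 0 <= harmonic n.
Proof.
  induction n as [|n IH]; cbn [harmonic]; [lra|].
  assert (0 < / INR (S n)) by (apply Rinv_0_lt_compat, lt_0_INR; lia). lra.
Qed.

Lemma harmonic_le n : harmonic n <= INR n.
Proof.
  induction n as [|n IH]; cbn [harmonic]; [simpl; lra|].
  assert (/ INR (S n) <= 1).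
  { rewrite <- Rinv_1. apply Rinv_le_contravar; [lra|]. apply (le_INR 1); lia. }
  assert (INR (S n) = INR n + 1) by apply S_INR. lra.
Qed.

Definition harmonic_binom (n : nat) : R := harmonic n * central_binom n.

Definition harmonic_binom_div (n : nat) : R :=
  match n with O => 0 | S _ => harmonic_binom n / INR n end.

Definition inv_nat (n : nat) : R := match n with O => 0 | S _ => / INR n end.

Definition inv_sq_nat (n : nat) : R := match n with O => 0 | S _ => / INR n ^ 2 end.

Lemma harmonic_binom_nonneg n : 0 <= harmonic_binom n.
Proof.
  apply Rmult_le_pos; [apply harmonic_nonneg | left; apply central_binom_pos].
Qed.

Lemma harmonic_binom_succ n :
  INR (S n) * harmonic_binom (S n)
  = (4 * INR n + 2) * harmonic_binom n + central_binom (S n).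
Proof.
  unfold harmonic_binom. cbn [harmonic].
  rewrite Rmult_plus_distr_r, Rmult_plus_distr_l, Rmult_comm, Rmult_assoc,
    (Rmult_comm (central_binom (S n))), central_binom_succ.
  assert (0 < INR (S n)) by (apply lt_0_INR; lia).
  field. lra.
Qed.

Lemma CV_radius_ge_of_bounded a r M :
  (forall n, Rabs (a n * r ^ n) <= M) -> Rbar_le r (CV_radius a).
Proof. intro Hbd. apply (proj1 (CV_radius_bounded a)). exists M. exact Hbd. Qed.

Lemma CV_radius_le_of_abs_le a b :
  (forall n, Rabs (b n) <= Rabs (a n)) -> Rbar_le (CV_radius a) (CV_radius b).
Proof.
  intro Hab. apply (proj2 (CV_radius_bounded a)). intros r [M HM].
  apply CV_radius_ge_of_bounded with M. intro n.
  apply Rle_trans with (2 := HM n). rewrite !Rabs_mult.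
  apply Rmult_le_compat_r; [apply Rabs_pos | apply Hab].
Qed.

Lemma CV_radius_central_binom : Rbar_le (1 / 4) (CV_radius central_binom).
Proof.
  apply CV_radius_ge_of_bounded with 1. intro n.
  rewrite Rabs_right.
  - apply Rle_trans with (4 ^ n * (1 / 4) ^ n).
    + apply Rmult_le_compat_r; [apply pow_le; lra | apply central_binom_le_pow4].
    + rewrite <- Rpow_mult_distr. replace (4 * (1 / 4)) with 1 by lra. rewrite pow1. lra.
  - apply Rle_ge, Rmult_le_pos; [left; apply central_binom_pos | apply pow_le; lra].
Qed.

(* H_n C(2n,n) <= (4n+2) C(2n,n) = (n+1) C(2n+2,n+1), a coefficient of the derivative series. *)
Lemma CV_radius_harmonic_binom : Rbar_le (1 / 4) (CV_radius harmonic_binom).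
Proof.
  apply Rbar_le_trans with (1 := CV_radius_central_binom).
  rewrite <- CV_radius_derive. apply CV_radius_le_of_abs_le. intro n.
  unfold PS_derive. rewrite central_binom_succ.
  assert (Hn := pos_INR n). assert (Hc := central_binom_pos n).
  assert (HH := harmonic_le n). assert (HH0 := harmonic_nonneg n).
  unfold harmonic_binom. rewrite !Rabs_right by (apply Rle_ge; nra). nra.
Qed.

Lemma CV_radius_harmonic_binom_div : Rbar_le (1 / 4) (CV_radius harmonic_binom_div).
Proof.
  apply Rbar_le_trans with (1 := CV_radius_harmonic_binom).
  apply CV_radius_le_of_abs_le. intros [|n]; [simpl; rewrite Rabs_R0; apply Rabs_pos|].
  assert (H1 : 1 <= INR (S n)) by (apply (le_INR 1); lia).
  assert (Hq := harmonic_binom_nonneg (S n)).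
  unfold harmonic_binom_div. rewrite !Rabs_right.
  - unfold Rdiv. rewrite <- (Rmult_1_r (harmonic_binom (S n))) at 2.
    apply Rmult_le_compat_l; [exact Hq|]. rewrite <- Rinv_1. apply Rinv_le_contravar; lra.
  - lra.
  - apply Rle_ge, Rdiv_le_0_compat; lra.
Qed.

Lemma CV_radius_inv_nat : Rbar_le 1 (CV_radius inv_nat).
Proof.
  apply CV_radius_ge_of_bounded with 1. intros [|n]; rewrite pow1, Rmult_1_r.
  - simpl. rewrite Rabs_R0. lra.
  - assert (1 <= INR (S n)) by (apply (le_INR 1); lia).
    unfold inv_nat. rewrite Rabs_right.
    + rewrite <- Rinv_1. apply Rinv_le_contravar; lra.
    + apply Rle_ge. left. apply Rinv_0_lt_compat. lra.
Qed.

Lemma CV_radius_inv_sq_nat : Rbar_le 1 (CV_radius inv_sq_nat).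
Proof.
  apply CV_radius_ge_of_bounded with 1. intros [|n]; rewrite pow1, Rmult_1_r.
  - simpl. rewrite Rabs_R0. lra.
  - assert (1 <= INR (S n)) by (apply (le_INR 1); lia).
    unfold inv_sq_nat. rewrite Rabs_right.
    + rewrite <- Rinv_1. apply Rinv_le_contravar; nra.
    + apply Rle_ge. left. apply Rinv_0_lt_compat. nra.
Qed.

Lemma lt_CV_radius a r x :
  Rabs x < r -> Rbar_le r (CV_radius a) -> Rbar_lt (Rabs x) (CV_radius a).
Proof. intros Hx Hr. exact (Rbar_lt_le_trans (Rabs x) r _ Hx Hr). Qed.

Lemma PSeries_lincomb a b d u v x :
  ex_pseries b x -> ex_pseries d x -> (forall n, a n = u * b n + v * d n) ->
  PSeries a x = u * PSeries b x + v * PSeries d x.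
Proof.
  intros Hb Hd Hab.
  rewrite (PSeries_ext a (PS_plus (PS_scal u b) (PS_scal v d))) by (intro; apply Hab).
  rewrite PSeries_plus, !PSeries_scal; [reflexivity|..];
    apply ex_pseries_scal; auto; apply Rmult_comm.
Qed.

Lemma PS_incr_1_derive a n : PS_incr_1 (PS_derive a) n = INR n * a n.
Proof. destruct n as [|n]; [symmetry; apply Rmult_0_l | reflexivity]. Qed.

Lemma PSeries_derive_mul_x a x :
  x * PSeries (PS_derive a) x = PSeries (fun n => INR n * a n) x.
Proof. rewrite <- PSeries_incr_1. apply PSeries_ext, PS_incr_1_derive. Qed.

Lemma CV_radius_mul_nat a : CV_radius (fun n => INR n * a n) = CV_radius a.
Proof.
  rewrite <- (CV_radius_ext _ _ (PS_incr_1_derive a)).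
  rewrite CV_radius_incr_1. apply CV_radius_derive.
Qed.

Lemma PSeries_central_binom_ode x : Rabs x < 1 / 4 ->
  (1 - 4 * x) * PSeries (PS_derive central_binom) x = 2 * PSeries central_binom x.
Proof.
  intro Hx.
  assert (Hr : Rbar_lt (Rabs x) (CV_radius central_binom))
    by exact (lt_CV_radius _ _ _ Hx CV_radius_central_binom).
  assert (Hrec : PSeries (PS_derive central_binom) x
                 = 4 * PSeries (fun n => INR n * central_binom n) x
                   + 2 * PSeries central_binom x).
  { apply PSeries_lincomb.
    - apply CV_radius_inside. rewrite CV_radius_mul_nat. exact Hr.
    - apply CV_radius_inside, Hr.
    - intro n. unfold PS_derive. rewrite central_binom_succ. ring. }
  rewrite <- PSeries_derive_mul_x in Hrec. lra.
Qed.

Lemma PSeries_harmonic_binom_ode x : Rabs x < 1 / 4 ->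
  x * (1 - 4 * x) * PSeries (PS_derive harmonic_binom) x
  = 2 * x * PSeries harmonic_binom x + PSeries central_binom x - 1.
Proof.
  intro Hx.
  assert (HrB : Rbar_lt (Rabs x) (CV_radius central_binom))
    by exact (lt_CV_radius _ _ _ Hx CV_radius_central_binom).
  assert (HrQ : Rbar_lt (Rabs x) (CV_radius harmonic_binom))
    by exact (lt_CV_radius _ _ _ Hx CV_radius_harmonic_binom).
  assert (Hdecr : ex_pseries (PS_decr_1 central_binom) x)
    by (apply CV_radius_inside; rewrite CV_radius_decr_1; exact HrB).
  assert (Hsplit : PSeries (fun n => PS_derive harmonic_binom n - PS_decr_1 central_binom n) x
                   = 1 * PSeries (PS_derive harmonic_binom) x
                     + -1 * PSeries (PS_decr_1 central_binom) x).
  { apply PSeries_lincomb; [apply ex_pseries_derive, HrQ | exact Hdecr | intro; ring]. }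
  assert (Hrec : PSeries (fun n => PS_derive harmonic_binom n - PS_decr_1 central_binom n) x
                 = 4 * PSeries (fun n => INR n * harmonic_binom n) x
                   + 2 * PSeries harmonic_binom x).
  { apply PSeries_lincomb.
    - apply CV_radius_inside. rewrite CV_radius_mul_nat. exact HrQ.
    - apply CV_radius_inside, HrQ.
    - intro n. unfold PS_derive, PS_decr_1. rewrite harmonic_binom_succ. ring. }
  rewrite <- PSeries_derive_mul_x in Hrec.
  rewrite (PSeries_decr_1 _ _ (CV_radius_inside _ _ HrB)), central_binom_0.
  set (Q' := PSeries (PS_derive harmonic_binom) x) in *.
  set (D := PSeries (PS_decr_1 central_binom) x) in *.
  replace (x * (1 - 4 * x) * Q') with (x * (Q' - 4 * (x * Q'))) by ring.
  replace (Q' - 4 * (x * Q')) with (2 * PSeries harmonic_binom x + D) by lra.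
  ring.
Qed.

Lemma eq_of_is_derive_eq (f g df dg : R -> R) a b : a <= b ->
  (forall t, a <= t <= b -> is_derive f t (df t)) ->
  (forall t, a <= t <= b -> is_derive g t (dg t)) ->
  (forall t, a < t < b -> df t = dg t) ->
  f a = g a -> f b = g b.
Proof.
  intros Hab Hf Hg Hdfg Ha.
  assert (Hdiff : forall t, a <= t <= b -> is_derive (fun s => f s - g s) t (df t - dg t))
    by (intros t Ht; apply (is_derive_minus f g); auto).
  destruct (MVT_gen (fun s => f s - g s) a b (fun _ => 0)) as [c [_ Hc]].
  - rewrite Rmin_left, Rmax_right by exact Hab. intros t Ht.
    replace 0 with (df t - dg t) by (rewrite Hdfg; [ring | exact Ht]).
    apply Hdiff. lra.
  - rewrite Rmin_left, Rmax_right by exact Hab. intros t Ht.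
    apply continuity_pt_filterlim, (ex_derive_continuous (fun s => f s - g s)).
    eexists. apply Hdiff, Ht.
  - lra.
Qed.

(* omega y = sqrt (1 - 4 xi y) for -1 < y <= 1, by one_sub_4xi. *)
Definition xi (y : R) : R := y / (1 + y) ^ 2.

Definition omega (y : R) : R := (1 - y) / (1 + y).

Lemma one_sub_4xi y : -1 < y -> 1 - 4 * xi y = omega y ^ 2.
Proof. intro Hy. unfold xi, omega. field. lra. Qed.

Lemma xi_bound y : 0 <= y < 1 -> Rabs (xi y) < 1 / 4.
Proof.
  intro Hy. unfold xi. assert (0 < (1 + y) ^ 2) by nra.
  rewrite Rabs_right by (apply Rle_ge, Rdiv_le_0_compat; lra).
  apply Rmult_lt_reg_r with ((1 + y) ^ 2); [lra|].
  unfold Rdiv. rewrite Rmult_assoc, Rinv_l by lra. nra.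
Qed.

Lemma is_derive_xi y : -1 < y -> is_derive xi y ((1 - y) / (1 + y) ^ 3).
Proof. intro Hy. unfold xi. auto_derive; [nra | field; lra]. Qed.

Lemma is_derive_omega y : -1 < y -> is_derive omega y (-2 / (1 + y) ^ 2).
Proof. intro Hy. unfold omega. auto_derive; [lra | field; lra]. Qed.

Lemma is_derive_PSeries_xi a y : -1 < y -> Rbar_lt (Rabs (xi y)) (CV_radius a) ->
  is_derive (fun t => PSeries a (xi t)) y
    ((1 - y) / (1 + y) ^ 3 * PSeries (PS_derive a) (xi y)).
Proof.
  intros Hy Hr. apply (is_derive_comp (PSeries a) xi).
  - apply is_derive_PSeries, Hr.
  - apply is_derive_xi, Hy.
Qed.

Lemma mul_nat_harmonic_binom_div n : INR n * harmonic_binom_div n = harmonic_binom n.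
Proof.
  destruct n as [|n].
  - unfold harmonic_binom. simpl. ring.
  - unfold harmonic_binom_div. field. apply not_0_INR. lia.
Qed.

Lemma mul_nat_inv_sq_nat n : INR n * inv_sq_nat n = inv_nat n.
Proof.
  destruct n as [|n]; [simpl; ring|].
  unfold inv_sq_nat, inv_nat. field. apply not_0_INR. lia.
Qed.

Lemma PSeries_derive_inv_nat t : Rabs t < 1 -> PSeries (PS_derive inv_nat) t = / (1 - t).
Proof.
  intro Ht. rewrite (PSeries_ext _ (fun _ => 1)).
  - unfold PSeries. rewrite (Series_ext _ (fun k => t ^ k)) by (intro; ring).
    apply is_series_unique, is_series_geom, Ht.
  - intro n. unfold PS_derive. cbn [inv_nat]. apply Rinv_r, not_0_INR. lia.
Qed.

Lemma PSeries_central_binom_xi y : 0 <= y < 1 ->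
  PSeries central_binom (xi y) * omega y = 1.
Proof.
  intro Hy.
  apply (eq_of_is_derive_eq (fun t => PSeries central_binom (xi t) * omega t) (fun _ => 1)
    (fun t => (1 - t) / (1 + t) ^ 3 * PSeries (PS_derive central_binom) (xi t) * omega t
              + PSeries central_binom (xi t) * (-2 / (1 + t) ^ 2))
    (fun _ => 0) 0 y); [lra | | | |].
  - intros t Ht. apply (is_derive_mult (fun s => PSeries central_binom (xi s)) omega).
    + apply is_derive_PSeries_xi; [lra|].
      apply lt_CV_radius with (1 / 4); [apply xi_bound; lra | apply CV_radius_central_binom].
    + apply is_derive_omega. lra.
    + intros; apply Rmult_comm.
  - intros t _. auto_derive; [exact I | ring].
  - intros t Ht.
    assert (Hode := PSeries_central_binom_ode (xi t) (xi_bound t ltac:(lra))).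
    rewrite one_sub_4xi in Hode by lra.
    assert (Hw : 0 < omega t) by (unfold omega; apply Rdiv_lt_0_compat; lra).
    set (B := PSeries central_binom (xi t)) in *.
    set (B' := PSeries (PS_derive central_binom) (xi t)) in *.
    replace B' with (2 * B / omega t ^ 2)
      by (rewrite <- Hode; field; apply Rgt_not_eq, Hw).
    unfold omega. field. lra.
  - replace (xi 0) with 0 by (unfold xi; field). unfold omega.
    rewrite PSeries_0, central_binom_0. field.
Qed.

Lemma PSeries_harmonic_binom_xi y : 0 <= y < 1 ->
  PSeries harmonic_binom (xi y) * omega y = 2 * PSeries inv_nat y.
Proof.
  intro Hy.
  apply (eq_of_is_derive_eq (fun t => PSeries harmonic_binom (xi t) * omega t)
    (fun t => 2 * PSeries inv_nat t)
    (fun t => (1 - t) / (1 + t) ^ 3 * PSeries (PS_derive harmonic_binom) (xi t) * omega t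
              + PSeries harmonic_binom (xi t) * (-2 / (1 + t) ^ 2))
    (fun t => 2 * / (1 - t)) 0 y); [lra | | | |].
  - intros t Ht. apply (is_derive_mult (fun s => PSeries harmonic_binom (xi s)) omega).
    + apply is_derive_PSeries_xi; [lra|].
      apply lt_CV_radius with (1 / 4); [apply xi_bound; lra | apply CV_radius_harmonic_binom].
    + apply is_derive_omega. lra.
    + intros; apply Rmult_comm.
  - intros t Ht. apply is_derive_scal.
    assert (Ht1 : Rabs t < 1) by (rewrite Rabs_right; lra).
    rewrite <- PSeries_derive_inv_nat by exact Ht1.
    apply is_derive_PSeries, lt_CV_radius with 1; [exact Ht1 | apply CV_radius_inv_nat].
  - intros t Ht.
    assert (Hode := PSeries_harmonic_binom_ode (xi t) (xi_bound t ltac:(lra))).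
    assert (HB := PSeries_central_binom_xi t ltac:(lra)).
    rewrite one_sub_4xi in Hode by lra.
    assert (Hw : 0 < omega t) by (unfold omega; apply Rdiv_lt_0_compat; lra).
    assert (Hxi : 0 < xi t) by (unfold xi; apply Rdiv_lt_0_compat; nra).
    set (B := PSeries central_binom (xi t)) in *.
    set (Q := PSeries harmonic_binom (xi t)) in *.
    set (Q' := PSeries (PS_derive harmonic_binom) (xi t)) in *.
    assert (HB' : B = / omega t).
    { apply (Rmult_eq_reg_r (omega t)); [rewrite HB; field |]; lra. }
    rewrite HB' in Hode.
    replace Q' with ((2 * xi t * Q + / omega t - 1) / (xi t * omega t ^ 2))
      by (rewrite <- Hode; field; split; lra).
    unfold xi, omega. field. repeat split; lra.
  - replace (xi 0) with 0 by (unfold xi; field).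
    rewrite !PSeries_0. unfold harmonic_binom, inv_nat. simpl. ring.
Qed.

Lemma PSeries_harmonic_binom_div_xi y : 0 <= y < 1 ->
  PSeries harmonic_binom_div (xi y) = 2 * PSeries inv_sq_nat y.
Proof.
  intro Hy.
  apply (eq_of_is_derive_eq (fun t => PSeries harmonic_binom_div (xi t))
    (fun t => 2 * PSeries inv_sq_nat t)
    (fun t => (1 - t) / (1 + t) ^ 3 * PSeries (PS_derive harmonic_binom_div) (xi t))
    (fun t => 2 * PSeries (PS_derive inv_sq_nat) t) 0 y); [lra | | | |].
  - intros t Ht. apply is_derive_PSeries_xi; [lra|].
    apply lt_CV_radius with (1 / 4); [apply xi_bound; lra | apply CV_radius_harmonic_binom_div].
  - intros t Ht. apply is_derive_scal, is_derive_PSeries, lt_CV_radius with 1;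
      [rewrite Rabs_right; lra | apply CV_radius_inv_sq_nat].
  - intros t Ht.
    assert (HQ := PSeries_harmonic_binom_xi t ltac:(lra)).
    assert (HA := PSeries_derive_mul_x harmonic_binom_div (xi t)).
    assert (HL := PSeries_derive_mul_x inv_sq_nat t).
    rewrite (PSeries_ext _ _ _ mul_nat_harmonic_binom_div) in HA.
    rewrite (PSeries_ext _ _ _ mul_nat_inv_sq_nat) in HL.
    assert (Hxi : 0 < xi t) by (unfold xi; apply Rdiv_lt_0_compat; nra).
    set (A' := PSeries (PS_derive harmonic_binom_div) (xi t)) in *.
    set (L' := PSeries (PS_derive inv_sq_nat) t) in *.
    set (Q := PSeries harmonic_binom (xi t)) in *.
    replace A' with (Q / xi t) by (rewrite <- HA; field; lra).
    replace L' with (Q * omega t / (2 * t)) by (rewrite HQ, <- HL; field; lra).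
    unfold xi, omega. field. repeat split; lra.
  - replace (xi 0) with 0 by (unfold xi; field).
    rewrite !PSeries_0. simpl. ring.
Qed.

Lemma Li2_PSeries x : Li2 x = PSeries inv_sq_nat x.
Proof.
  unfold Li2, PSeries. apply Series_ext. intros [|n]; [simpl; ring|].
  unfold inv_sq_nat. change (x ^ S n / INR (S n) ^ 2 = / INR (S n) ^ 2 * x ^ S n).
  field. apply not_0_INR. lia.
Qed.

Lemma xi_one_third : xi (1 / 3) = 3 / 16.
Proof. unfold xi. field. Qed.

Lemma mainTerm_eq n : mainTerm n = harmonic_binom_div n * (3 / 16) ^ n.
Proof.
  destruct n as [|n]; [simpl; ring|].
  unfold mainTerm, harmonic_binom_div, harmonic_binom.
  replace (2 ^ (4 * S n)) with (16 ^ S n) by (rewrite pow_mult; f_equal; ring).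
  replace ((3 / 16) ^ S n) with (3 ^ S n / 16 ^ S n)
    by (unfold Rdiv; rewrite Rpow_mult_distr, pow_inv; reflexivity).
  field. split; [apply pow_nonzero; lra | apply not_0_INR; lia].
Qed.

Theorem mainTheorem11 : is_series mainTerm (2 * Li2 (1 / 3)).
Proof.
  rewrite Li2_PSeries, <- PSeries_harmonic_binom_div_xi, xi_one_third by lra.
  apply (is_series_ext (fun n => harmonic_binom_div n * (3 / 16) ^ n));
    [intro n; symmetry; apply mainTerm_eq|].
  apply Series_correct, ex_pseries_R, CV_radius_inside, lt_CV_radius with (1 / 4);
    [rewrite Rabs_right; lra | apply CV_radius_harmonic_binom_div].
Qed.
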